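(* Fix $n\ge 2$, a dictator agent $t\in\{1,\dots,n\}$ and a parameter $\varepsilon\in(0,\frac12)$, and let $g$ be any function assigning to each profile $\mathbf{x}\in\mathbb{R}^n$ a point $g(\mathbf{x})\in(-\infty,\,x_l-L)\cup(x_l+2L,\,+\infty)$, where $x_l=\min\mathbf{x}$, $x_r=\max\mathbf{x}$, $L=x_r-x_l$. Let $f$ be the mechanism that on $\mathbf{x}$ outputs $l_1=x_t$ and $$l_2=\begin{cases} x_t+\max\left\{\left(\tfrac{2}{\varepsilon}-2\right)(x_t-x_l),\; x_r-x_t\right\} & \text{if } x_t\in[x_l,\,x_l+\varepsilon L],\\[2pt] g(\mathbf{x}) & \text{if } x_t\in(x_l+\varepsilon L,\,x_l+(1-\varepsilon)L),\\[2pt] x_t-\max\left\{x_t-x_l,\; \left(\tfrac{2}{\varepsilon}-2\right)(x_r-x_t)\right\} & \text{if } x_t\in[x_l+(1-\varepsilon)L,\,x_r] \text{ and not in the first case}.\end{cases}$$ Then for every profile $\mathbf{x}\in\mathbb{R}^n$, $SC(f,\mathbf{x})\le\left(\frac{1}{\varepsilon}-1\right)(n-1)\,OPT(\mathbf{x})$.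
   Context: Two-facility game on a line: agent $i$ has location $x_i\in\mathbb{R}$. For facility locations $\{l_1,l_2\}$, an agent at $y$ has cost $\min\{|l_1-y|,|l_2-y|\}$. $SC(f,\mathbf{x})$ is the sum over all agents of their costs under $f(\mathbf{x})$, and $OPT(\mathbf{x})=\min_{l_1,l_2\in\mathbb{R}}\sum_i\min\{|l_1-x_i|,|l_2-x_i|\}$. *)

From HB Require Import structures.
From mathcomp Require Import all_boot all_order all_algebra.
From mathcomp Require Import all_classical all_reals.
Set Implicit Arguments. Unset Strict Implicit. Unset Printing Implicit Defensive.
Import Order.TTheory GRing.Theory Num.Theory.
Local Open Scope ring_scope.
Local Open Scope classical_set_scope.

Section Defs.
Variable R : realType.

Definition agent_cost (l : R * R) (y : R) : R :=
  Num.min `|l.1 - y| `|l.2 - y|.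

Definition cost (n : nat) (l : R * R) (x : 'I_n -> R) : R :=
  \sum_(i < n) agent_cost l (x i).

Definition SC (n : nat) (f : ('I_n -> R) -> R * R) (x : 'I_n -> R) : R :=
  cost (f x) x.

(* OPT(x) = min over l1 l2 in R of the social cost (as an infimum; it is attained) *)
Definition OPT (n : nat) (x : 'I_n -> R) : R :=
  inf (range (fun l : R * R => cost l x)).

(* x_l = min x, x_r = max x (seeded with the entry of some agent t, so the
   big operator ranges over a nonempty family) *)
Definition xmin (n : nat) (t : 'I_n) (x : 'I_n -> R) : R :=
  \big[Num.min/x t]_(i < n) x i.
Definition xmax (n : nat) (t : 'I_n) (x : 'I_n -> R) : R :=
  \big[Num.max/x t]_(i < n) x i.

Definition mech (n : nat) (t : 'I_n) (eps : R) (g : ('I_n -> R) -> R)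
    (x : 'I_n -> R) : R * R :=
  let xl := xmin t x in
  let xr := xmax t x in
  let L := xr - xl in
  let xt := x t in
  (xt,
   if (xl <= xt) && (xt <= xl + eps * L) then
     xt + Num.max ((2 / eps - 2) * (xt - xl)) (xr - xt)
   else if (xl + eps * L < xt) && (xt < xl + (1 - eps) * L) then g x
   else xt - Num.max (xt - xl) ((2 / eps - 2) * (xr - xt))).

End Defs.

(* For every agent i, any two facilities cost at least
   c_i = min (x_i - x_l) (x_r - x_i): of the three agents at x_l, x_i, x_r,
   two share a facility.  With m = 1/eps - 1, every agent i is within
   m * max c_t c_i of a facility of the mechanism.  Near an endpoint, x_t
   serves the agents within m c_t of it and the second facility, at x_r or
   at distance 2 m c_t from x_t, serves the others.  In the middle both gaps
   of x_t exceed eps L, so L <= (m + 1) c_t and x_t alone serves every agent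
   within L - c_t <= m c_t.  Summing over the n - 1 agents other than t
   bounds SC by m (n - 1) times the cost of any placement. *)

From HB Require Import structures.
From mathcomp Require Import all_boot all_order all_algebra.
From mathcomp Require Import all_classical all_reals.
From mathcomp Require Import lra.
Import Order.TTheory GRing.Theory Num.Theory.
Local Open Scope ring_scope.

Section TwoFacilities.
Variables (R : realType) (n : nat).
Implicit Types (l : R * R) (x : 'I_n -> R).

Lemma agent_costN (a b y : R) :
  agent_cost (- a, - b) (- y) = agent_cost (a, b) y.
Proof. by rewrite /agent_cost /= -!opprD !normrN. Qed.

Lemma agent_cost_ge0 l (y : R) : 0 <= agent_cost l y.
Proof. by rewrite le_min !normr_ge0. Qed.

(* Two of the three points share their nearest facility. *)
Lemma gap_le_agent_cost3 l (p q r : R) :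
  p <= q -> q <= r ->
  Num.min (q - p) (r - q) <= agent_cost l p + agent_cost l q + agent_cost l r.
Proof.
case: l => a b pq qr; rewrite /agent_cost /= ge_min.
have bounds (z u : R) : - `|z - u| <= z - u <= `|z - u|.
  by rewrite -ler_norml lexx.
have [/andP[ap ap'] /andP[bp bp']] := (bounds a p, bounds b p).
have [/andP[aq aq'] /andP[bq bq']] := (bounds a q, bounds b q).
have [/andP[ar ar'] /andP[br br']] := (bounds a r, bounds b r).
by case: (leP `|a - p| `|b - p|); case: (leP `|a - q| `|b - q|);
  case: (leP `|a - r| `|b - r|) => *;
  first [apply/orP; left; lra | apply/orP; right; lra].
Qed.

Lemma cost_ge0 l x : 0 <= cost l x.
Proof. by apply: sumr_ge0 => i _; apply: agent_cost_ge0. Qed.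

Lemma gap_le_cost l x (p q r : 'I_n) :
  x p <= x q -> x q <= x r -> Num.min (x q - x p) (x r - x q) <= cost l x.
Proof.
move=> pq qr.
have [gap_le0|] := lerP (Num.min (x q - x p) (x r - x q)) 0.
  exact: le_trans gap_le0 (cost_ge0 l x).
rewrite lt_min !subr_gt0 => /andP[pq' qr'].
have [p_q q_r p_r] : [/\ p != q, q != r & p != r].
  by split; apply/eqP=> e; move: pq' qr'; rewrite e; lra.
rewrite /cost (bigD1 p) // (bigD1 q) 1?eq_sym // (bigD1 r) /=; last first.
  by rewrite eq_sym p_r eq_sym q_r.
rewrite !addrA; apply: le_trans (gap_le_agent_cost3 l _ _ _ pq qr) _.
by rewrite lerDl sumr_ge0 // => i _; apply: agent_cost_ge0.
Qed.

Lemma agent_cost_fst l : agent_cost l l.1 = 0.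
Proof. by rewrite /agent_cost subrr normr0 min_l. Qed.

Lemma xmin_le t x (i : 'I_n) : xmin t x <= x i.
Proof. exact: bigmin_le. Qed.

Lemma le_xmax t x (i : 'I_n) : x i <= xmax t x.
Proof. exact: le_bigmax. Qed.

Lemma xmin_attained t x : exists i, xmin t x = x i.
Proof.
apply: (big_ind (fun v => exists i, v = x i)) => [|_ _ [i ->] [j ->]|i _].
- by exists t.
- by case: leP; [exists i | exists j].
- by exists i.
Qed.

Lemma xmax_attained t x : exists i, xmax t x = x i.
Proof.
apply: (big_ind (fun v => exists i, v = x i)) => [|_ _ [i ->] [j ->]|i _].
- by exists t.
- by case: leP; [exists j | exists i].
- by exists i.
Qed.

Lemma extreme_gap_le_cost l t x (i : 'I_n) :
  Num.min (x i - xmin t x) (xmax t x - x i) <= cost l x.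
Proof.
have := xmin_le t x i; have := le_xmax t x i.
have [il ->] := xmin_attained t x; have [ir ->] := xmax_attained t x.
by move=> i_ir il_i; apply: gap_le_cost.
Qed.

Lemma le_OPT x a : (forall l, a <= cost l x) -> a <= OPT x.
Proof.
move=> a_lb; apply: lb_le_inf => [|_ [l _ <-]]; last exact: a_lb.
by exists (cost (0, 0) x), (0, 0).
Qed.

Section Mechanism.
Variable eps : R.

Lemma ratio_gt1 : 0 < eps -> eps < 1 / 2 -> 1 < 1 / eps - 1.
Proof.
move=> eps_gt0 eps_lt_half.
have : 2 < 1 / eps by rewrite ltr_pdivlMr //; lra.
lra.
Qed.

Lemma ratio_mul_eps : 0 < eps -> (1 / eps - 1) * eps = 1 - eps.
Proof. by move=> eps_gt0; rewrite mulrBl mul1r mulVf ?mul1r // gt_eqF. Qed.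

Lemma agent_cost_left_le (xl xr xt y c : R) :
  0 < eps -> eps < 1 / 2 ->
  xl <= xt -> xt <= xl + eps * (xr - xl) -> xl <= y <= xr ->
  Num.min (xt - xl) (xr - xt) <= c -> Num.min (y - xl) (xr - y) <= c ->
  agent_cost (xt, xt + Num.max ((2 / eps - 2) * (xt - xl)) (xr - xt)) y
    <= (1 / eps - 1) * c.
Proof.
move=> eps_gt0 eps_lt_half xl_xt xt_left /andP[xl_y y_xr] gap_t gap_y.
have m_gt1 := ratio_gt1 eps_gt0 eps_lt_half.
set m := 1 / eps - 1 in m_gt1 *.
have -> : 2 / eps - 2 = 2 * m by rewrite /m mulrBr mulr1 mulrA mulr1.
have eps_L : eps * (xr - xl) <= (xr - xl) / 2.
  have L_ge0 : 0 <= xr - xl by lra.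
  by have := ler_wpM2r L_ge0 (ltW eps_lt_half); lra.
have d_le_c : xt - xl <= c by move: gap_t; rewrite ge_min => /orP[]; lra.
have c_ge0 : 0 <= c by lra.
have c_le_mc : c <= m * c.
  by have := ler_wpM2r c_ge0 (ltW m_gt1); rewrite mul1r.
have md_le_mc : m * (xt - xl) <= m * c by rewrite ler_pM2l; lra.
rewrite /agent_cost /= ge_min !ler_distl.
case: (leP (2 * m * (xt - xl)) (xr - xt)) => [kd_le | kd_gt].
  by move: gap_y; rewrite ge_min => /orP[] gap_y; apply/orP; [left | right]; lra.
by case: (lerP (y - xt) (m * (xt - xl))) => y_xt; apply/orP; [left | right]; lra.
Qed.

Lemma agent_cost_middle_le (xl xr xt y l2 c : R) :
  0 < eps -> eps < 1 / 2 ->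
  xl + eps * (xr - xl) < xt -> xt < xl + (1 - eps) * (xr - xl) ->
  xl <= y <= xr -> Num.min (xt - xl) (xr - xt) <= c ->
  agent_cost (xt, l2) y <= (1 / eps - 1) * c.
Proof.
move=> eps_gt0 eps_lt_half xt_right xt_left /andP[xl_y y_xr] gap_t.
have m_gt1 := ratio_gt1 eps_gt0 eps_lt_half.
have m_eps := ratio_mul_eps eps_gt0.
set m := 1 / eps - 1 in m_gt1 m_eps *.
have m_ge0 : 0 <= m by lra.
have far_le mu : eps * (xr - xl) <= mu -> (xr - xl) - mu <= m * mu.
  by move=> mu_ge; have := ler_wpM2l m_ge0 mu_ge; rewrite mulrA m_eps; lra.
rewrite /agent_cost /= ge_min ler_distl; apply/orP; left.
move: gap_t; case: (leP (xt - xl) (xr - xt)) => [d_le | d_gt] mu_le_c;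
  have := ler_wpM2l m_ge0 mu_le_c.
- by have := far_le (xt - xl) ltac:(lra); lra.
- by have := far_le (xr - xt) ltac:(lra); lra.
Qed.

Lemma agent_cost_right_le (xl xr xt y c : R) :
  0 < eps -> eps < 1 / 2 ->
  xl + (1 - eps) * (xr - xl) <= xt -> xt <= xr -> xl <= y <= xr ->
  Num.min (xt - xl) (xr - xt) <= c -> Num.min (y - xl) (xr - y) <= c ->
  agent_cost (xt, xt - Num.max (xt - xl) ((2 / eps - 2) * (xr - xt))) y
    <= (1 / eps - 1) * c.
Proof.
move=> eps_gt0 eps_lt_half xt_right xt_xr /andP[xl_y y_xr] gap_t gap_y.
(* The mirror image of the left case under y |-> - y. *)
rewrite -agent_costN.
have -> : - (xt - Num.max (xt - xl) ((2 / eps - 2) * (xr - xt)))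
  = - xt + Num.max ((2 / eps - 2) * (- xt - - xr)) (- xl - - xt).
  by rewrite opprB addrC maxC; congr (_ + Num.max (_ * _) _); lra.
apply: (agent_cost_left_le (- xr) (- xl)) => //; try lra.
- by rewrite minC; move: gap_t; congr (Num.min _ _ <= _); lra.
- by rewrite minC; move: gap_y; congr (Num.min _ _ <= _); lra.
Qed.

Lemma agent_cost_mech_le t g x (i : 'I_n) c :
  0 < eps -> eps < 1 / 2 ->
  Num.min (x t - xmin t x) (xmax t x - x t) <= c ->
  Num.min (x i - xmin t x) (xmax t x - x i) <= c ->
  agent_cost (mech t eps g x) (x i) <= (1 / eps - 1) * c.
Proof.
move=> eps_gt0 eps_lt_half gap_t gap_i.
have [xl_xt xt_xr] := (xmin_le t x t, le_xmax t x t).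
have xi_in : xmin t x <= x i <= xmax t x by rewrite xmin_le le_xmax.
rewrite /mech /=; case: ifP => [/andP[_ xt_left] | /negbT not_left].
  by apply: (agent_cost_left_le (xmin t x) (xmax t x)).
case: ifP => [/andP[xt_right xt_left] | /negbT not_middle].
  by apply: (agent_cost_middle_le (xmin t x) (xmax t x)).
apply: (agent_cost_right_le (xmin t x) (xmax t x)) => //.
move: not_left not_middle; rewrite xl_xt /= -!ltNge => xt_right.
by rewrite xt_right /= -leNgt.
Qed.

Lemma SC_mech_le_cost t g x l :
  0 < eps -> eps < 1 / 2 ->
  SC (mech t eps g) x <= (1 / eps - 1) * (n.-1)%:R * cost l x.
Proof.
move=> eps_gt0 eps_lt_half.
have agent_le i : agent_cost (mech t eps g x) (x i) <= (1 / eps - 1) * cost l x.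
  by apply: agent_cost_mech_le => //; apply: extreme_gap_le_cost.
rewrite /SC {1}/cost (bigD1 t) //= (agent_cost_fst (mech t eps g x)) add0r.
apply: le_trans (ler_sum _ (fun i _ => agent_le i)) _.
by rewrite sumr_const cardC1 card_ord mulr_natr mulrnAl.
Qed.

End Mechanism.
End TwoFacilities.

Theorem theorem6 (R : realType) (n : nat) (t : 'I_n) (eps : R)
  (g : ('I_n -> R) -> R) :
  (2 <= n)%N ->
  0 < eps -> eps < 1 / 2 ->
  (forall x : 'I_n -> R,
     g x < xmin t x - (xmax t x - xmin t x) \/
     xmin t x + 2 * (xmax t x - xmin t x) < g x) ->
  forall x : 'I_n -> R,
    SC (mech t eps g) x <= (1 / eps - 1) * (n.-1)%:R * OPT x.
Proof.
(* The range of [g] is irrelevant to the ratio: in the middle case every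
   agent is already served by [x t]. *)
move=> n_ge2 eps_gt0 eps_lt_half _ x.
have ratio_gt0 : 0 < (1 / eps - 1) * (n.-1)%:R.
  apply: mulr_gt0; first by have := ratio_gt1 _ _ eps_gt0 eps_lt_half; lra.
  by rewrite ltr0n -subn1 subn_gt0.
rewrite -ler_pdivrMl //; apply: le_OPT => l.
by rewrite ler_pdivrMl //; apply: SC_mech_le_cost.
Qed.
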